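(* Let $G$ be a finitely generated infinite group with finite generating set $S_G$ and let $H\ne\{1\}$ be a finite group; equip $H\wr G$ with the word metric with respect to $(H\setminus\{1\})\cup S_G$. Let $\gamma$ be the growth function of $G$ and $D^n_G$ an $n$-dimensional control function of $G$. Then for any $k\ge n$ there is a $k$-dimensional control function of $H\wr G$ which is weakly dominated by $t\mapsto (D^n_G(t)+t)\cdot\gamma(D^n_G(t)+t)$. Also, for any $k\ge n$, every $k$-dimensional control function of $H\wr G$ weakly dominates $\gamma$.
   Context: Wreath product: $H\wr G$ is the set of pairs $(f,g)$, $f:G\to H$ finitely supported, with $(f_1,g_1)(f_2,g_2)=(f_1\cdot(g_1f_2),g_1g_2)$ where $(gf)(\gamma)=f(g^{-1}\gamma)$; $g\in G$ is identified with $(1,g)$ and $a\in H$ with $(f_a,1)$. Growth function: $\gamma(r)=\#\{g\in G:|g|_{S_G}<r\}$. For a metric space $X$, $r>0$: $r$-components of $Y\subseteq X$ are classes of points joined by sequences in $Y$ with consecutive distances $<r$. An $m$-dimensional control function of $X$ is $D:\mathbb{R}_+\to\mathbb{R}_+\cup\{\infty\}$ such that for each $r>0$ there is a cover $\{X_0,\dots,X_m\}$ of $X$ such that every open ball $B(x,r)$ lies in some $X_i$ and every $r$-component of each $X_i$ has diameter at most $D(r)$. For functions $f,g$ on $\mathbb{R}_+$, $f$ weakly dominates $g$ if there are constants $\lambda\ge1$, $C\ge0$ with $g(t)\le\lambda f(\lambda t+C)+C$ for all $t\in\mathbb{R}_+$. *)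

From HB Require Import structures.
From mathcomp Require Import all_boot all_order all_algebra all_fingroup.
From mathcomp Require Import boolp classical_sets reals constructive_ereal ereal.
From Stdlib Require List.
From Stdlib Require Import Relations.
Set Implicit Arguments. Unset Strict Implicit. Unset Printing Implicit Defensive.
Import Order.TTheory GRing.Theory Num.Theory.
Local Open Scope ring_scope.
Local Open Scope ereal_scope.

Definition is_group (T : Type) (mul : T -> T -> T) (one : T) (inv : T -> T) : Prop :=
  (forall x y z, mul x (mul y z) = mul (mul x y) z) /\
  (forall x, mul one x = x) /\ (forall x, mul x one = x) /\
  (forall x, mul (inv x) x = one) /\ (forall x, mul x (inv x) = one).

Definition symm (T : Type) (inv : T -> T) (A : T -> Prop) : T -> Prop :=
  fun s => A s \/ A (inv s).

(* word metric w.r.t. the generating predicate A (symmetrized):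
   [wdist_le x y n] <-> d(x,y) = |x^{-1} y|_A <= n (as a natural number),
   i.e. some word of length <= n over A ∪ A^{-1} carries x to y. *)
Definition wdist_le (T : Type) (mul : T -> T -> T) (inv : T -> T) (A : T -> Prop)
  (x y : T) (n : nat) : Prop :=
  exists w : seq T, (size w <= n)%N /\ List.Forall (symm inv A) w /\ foldl mul x w = y.

Definition wdist_lt (R : realType) (T : Type) (mul : T -> T -> T) (inv : T -> T)
  (A : T -> Prop) (x y : T) (r : R) : Prop :=
  exists n : nat, wdist_le mul inv A x y n /\ (n%:R < r)%R.

(* d(x,y) <= D, with D in R ∪ {±oo} (d = min length; +oo if no word) *)
Definition wdist_leE (R : realType) (T : Type) (mul : T -> T -> T) (inv : T -> T)
  (A : T -> Prop) (x y : T) (D : \bar R) : Prop :=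
  D = +oo \/ exists n : nat, wdist_le mul inv A x y n /\ (n%:R)%:E <= D.

Definition generates (T : Type) (mul : T -> T -> T) (one : T) (inv : T -> T)
  (S : seq T) : Prop :=
  forall g, exists n, wdist_le mul inv (fun s => List.In s S) one g n.

Definition rcomp (R : realType) (T : Type) (A : T -> Prop)
  (dlt : T -> T -> R -> Prop) (r : R) (x y : T) : Prop :=
  A x /\ A y /\ clos_refl_trans T (fun a b => A a /\ A b /\ dlt a b r) x y.

(* m-dimensional control function of the metric space X (a subset of T),
   with distance given by [dlt] (d < r) and [dle] (d <= D). *)
Definition control_function (R : realType) (T : Type) (X : T -> Prop)
  (dlt : T -> T -> R -> Prop) (dle : T -> T -> \bar R -> Prop)
  (m : nat) (D : R -> \bar R) : Prop :=
  (forall t : R, (0 <= t)%R -> (0 <= D t)%E) /\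
  forall r : R, (0 < r)%R ->
    exists Xs : 'I_m.+1 -> T -> Prop,
      (forall i x, Xs i x -> X x) /\
      (forall x, X x -> exists i, Xs i x) /\
      (forall x, X x -> exists i, forall y, X y -> dlt x y r -> Xs i y) /\
      (forall i x y, rcomp (Xs i) dlt r x y -> dle x y (D r)).

Definition weakly_dominates (R : realType) (f g : R -> \bar R) : Prop :=
  exists lam C : R, (1 <= lam)%R /\ (0 <= C)%R /\
    forall t : R, (0 <= t)%R -> g t <= lam%:E * f (lam * t + C)%R + C%:E.

Definition is_growth_function (R : realType) (T : Type) (mul : T -> T -> T)
  (one : T) (inv : T -> T) (S : seq T) (gamma : R -> nat) : Prop :=
  forall r : R, exists l : seq T, List.NoDup l /\ size l = gamma r /\
    forall g, List.In g l <-> wdist_lt mul inv (fun s => List.In s S) one g r.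

(* extension of gamma to \bar R: gamma(+oo) = #G = +oo for infinite G *)
Definition growth_ext (R : realType) (gamma : R -> nat) (x : \bar R) : \bar R :=
  match x with
  | EFin r => ((gamma r)%:R)%:E
  | +oo => +oo
  | -oo => 0
  end.

Section Wreath.
Variables (G : Type) (mulG : G -> G -> G) (oneG : G) (invG : G -> G).
Variable H : finGroupType.

Definition wr := ((G -> H) * G)%type.

(* (f1,g1)(f2,g2) = (f1 . (g1 f2), g1 g2), (g f)(x) = f(g^{-1} x) *)
Definition wr_mul (p q : wr) : wr :=
  (fun x => (p.1 x * q.1 (mulG (invG p.2) x))%g, mulG p.2 q.2).
Definition wr_one : wr := (fun _ => 1%g, oneG).
Definition wr_inv (p : wr) : wr := (fun x => ((p.1 (mulG p.2 x))^-1)%g, invG p.2).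

(* finitely supported elements: the carrier of H wr G *)
Definition wr_elt (p : wr) : Prop :=
  exists l : seq G, forall x, p.1 x <> 1%g -> List.In x l.

(* generating set (H \ {1}) ∪ S_G, with a in H identified with (f_a, 1)
   (f_a(1) = a, f_a(x) = 1 otherwise) and g in G with (1, g) *)
Definition wr_gens (S : seq G) (p : wr) : Prop :=
  (exists a : H, a <> 1%g /\ p.2 = oneG /\ p.1 oneG = a /\
     forall x, x <> oneG -> p.1 x = 1%g)
  \/ (exists s, List.In s S /\ p = (fun _ => 1%g, s)).
End Wreath.

(* Lift a cover U_0, ..., U_n of G at scale rho = 4r + 1 to the sets of
   configurations whose cursor lies in U_i.  An r-chain in such a set projects to a
   rho-chain in U_i, and every lamp it switches lies at distance < r from the chain.
   Hence two configurations in one component have cursors at most D(rho) apart and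
   differ only at lamps in the ball of radius B = D(rho) + rho around the first cursor;
   visiting and setting these gamma(B) lamps one by one costs at most 2B + 1 each.

   With a <> 1 in H and the N = gamma(t) points of the t-ball, the 2^N
   configurations with cursor 1 and lamps a or 1 on these points form a cube whose
   neighbours are less than r = (k+2)t + 1 apart.  Every vertex b lies, with all its
   neighbours, in one piece; fix a representative of each component.  For each
   coordinate j, b or its neighbour across j disagrees at j with the representative of
   their common component.  There are at most D_W(r) disagreements per vertex and
   piece, so 2^N N <= 2^N (k+2) D_W(r). *)

From HB Require Import structures.
From mathcomp Require Import all_boot all_order all_algebra all_fingroup.
From mathcomp Require Import boolp classical_sets reals constructive_ereal ereal.
From mathcomp.algebra_tactics Require Import lra.
From Stdlib Require List.
From Stdlib Require Import Relations.
Import Order.TTheory GRing.Theory Num.Theory.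
Set Implicit Arguments. Unset Strict Implicit. Unset Printing Implicit Defensive.

Section GroupAxioms.
Variables (T : Type) (mul : T -> T -> T) (one : T) (inv : T -> T).
Hypothesis HT : is_group mul one inv.

Lemma grp_mulA x y z : mul x (mul y z) = mul (mul x y) z. Proof. by case: HT. Qed.
Lemma grp_mul1g x : mul one x = x. Proof. by case: HT => _ []. Qed.
Lemma grp_mulg1 x : mul x one = x. Proof. by case: HT => _ [] _ []. Qed.
Lemma grp_mulVg x : mul (inv x) x = one. Proof. by case: HT => _ [] _ [] _ []. Qed.
Lemma grp_mulgV x : mul x (inv x) = one. Proof. by case: HT => _ [] _ [] _ []. Qed.

Lemma grp_mulKg x y : mul (inv x) (mul x y) = y.
Proof. by rewrite grp_mulA grp_mulVg grp_mul1g. Qed.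

Lemma grp_mulKVg x y : mul x (mul (inv x) y) = y.
Proof. by rewrite grp_mulA grp_mulgV grp_mul1g. Qed.

Lemma grp_inv_uniq x y : mul x y = one -> inv x = y.
Proof. by move=> e; rewrite -(grp_mulg1 (inv x)) -e grp_mulKg. Qed.

Lemma grp_invgK x : inv (inv x) = x.
Proof. by apply: grp_inv_uniq; rewrite grp_mulVg. Qed.

Lemma grp_invMg x y : inv (mul x y) = mul (inv y) (inv x).
Proof. by apply: grp_inv_uniq; rewrite -grp_mulA grp_mulKVg grp_mulgV. Qed.

Lemma grp_invg1 : inv one = one.
Proof. by apply: grp_inv_uniq; rewrite grp_mul1g. Qed.

Lemma grp_invg_eq1 x : inv x = one -> x = one.
Proof. by move=> e; rewrite -(grp_invgK x) e grp_invg1. Qed.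
End GroupAxioms.

Section Words.
Variables (T : Type) (mul : T -> T -> T) (inv : T -> T) (A : T -> Prop).
Local Notation wd := (wdist_le mul inv A).
Local Notation letter := (symm inv A).

Lemma wdist_le_refl a : wd a a 0.
Proof. by exists [::]. Qed.

Lemma wdist_le_mono a b m m' : (m <= m')%N -> wd a b m -> wd a b m'.
Proof. by move=> le [w [hw hwf]]; exists w; split => //; apply: leq_trans le. Qed.

Lemma wdist_le_cons a s b m : letter s -> wd (mul a s) b m -> wd a b m.+1.
Proof. by move=> hs [w [hw [hf e]]]; exists (s :: w); do !split => //; constructor. Qed.

Lemma wdist_le_step a s : letter s -> wd a (mul a s) 1.
Proof. by move=> hs; apply: wdist_le_cons hs (wdist_le_refl _). Qed.

Lemma wdist_le_ind (P : T -> T -> nat -> Prop) :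
  (forall a, P a a 0) ->
  (forall a s b m, letter s -> P (mul a s) b m -> P a b m.+1) ->
  (forall a b m m', (m <= m')%N -> P a b m -> P a b m') ->
  forall a b m, wd a b m -> P a b m.
Proof.
move=> P0 Pcons Pmono a b m [w [hw [hf <-]]]; apply: (Pmono _ _ _ _ hw).
elim: w a {hw} hf => [|s w IH] a hf; first exact: P0.
by case/List.Forall_cons_iff: hf => hs hw; apply: Pcons hs (IH _ hw).
Qed.

Lemma wdist_le_trans a b c m m' : wd a b m -> wd b c m' -> wd a c (m + m').
Proof.
move=> hab hbc; elim/wdist_le_ind: hab hbc => [x|x s y k hs IH|x y k1 k2 le IH] //.
  by move/IH; rewrite addSn; apply: wdist_le_cons.
by move/IH; apply: wdist_le_mono; rewrite leq_add2r.
Qed.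
End Words.

Lemma wdist_le_lipschitz (T T' : Type) (mul : T -> T -> T) (inv : T -> T) (A : T -> Prop)
    (mul' : T' -> T' -> T') (inv' : T' -> T') (A' : T' -> Prop) (F : T -> T') :
  (forall a s, symm inv A s -> wdist_le mul' inv' A' (F a) (F (mul a s)) 1) ->
  forall a b m, wdist_le mul inv A a b m -> wdist_le mul' inv' A' (F a) (F b) m.
Proof.
move=> Fstep; apply: wdist_le_ind => [a|a s b m hs IH|a b m m' le]; first exact: wdist_le_refl.
  by rewrite -add1n; apply: wdist_le_trans (Fstep _ _ hs) IH.
exact: wdist_le_mono.
Qed.

Section GroupWords.
Variables (T : Type) (mul : T -> T -> T) (one : T) (inv : T -> T).
Hypothesis HT : is_group mul one inv.
Variable A : T -> Prop.
Local Notation wd := (wdist_le mul inv A).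
Local Notation letter := (symm inv A).

Lemma symm_inv s : letter s -> letter (inv s).
Proof. by case=> hs; [right; rewrite (grp_invgK HT) | left]. Qed.

Lemma wdist_le_sym a b m : wd a b m -> wd b a m.
Proof.
elim/wdist_le_ind => [x|x s y k hs IH|x y k k' le]; first exact: wdist_le_refl.
  rewrite -addn1; apply: wdist_le_trans IH _.
  have := wdist_le_step mul (mul x s) (symm_inv hs).
  by rewrite -(grp_mulA HT) (grp_mulgV HT) (grp_mulg1 HT).
exact: wdist_le_mono.
Qed.

Lemma wdist_le_mull c a b m : wd a b m -> wd (mul c a) (mul c b) m.
Proof.
by apply: wdist_le_lipschitz => a' s hs; rewrite (grp_mulA HT); apply: wdist_le_step.
Qed.

Lemma wdist_lt_sym (R : realType) a b (r : R) :
  wdist_lt mul inv A a b r -> wdist_lt mul inv A b a r.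
Proof. by case=> m [hm hmr]; exists m; split => //; apply: wdist_le_sym. Qed.
End GroupWords.

Section CubeCover.
Variables (N k : nat).
Local Notation cube := {ffun 'I_N -> bool}.

Definition cube_flip (b : cube) (j : 'I_N) : cube :=
  [ffun j' => if j' == j then ~~ b j' else b j'].

Lemma cube_flip_inj j : injective (cube_flip ^~ j).
Proof.
apply: (can_inj (g := cube_flip ^~ j)) => b; apply/ffunP => j'.
by rewrite !ffunE; case: eqP => // ->; rewrite negbK.
Qed.

Variables (X : 'I_k.+1 -> pred cube) (rep : 'I_k.+1 -> cube -> cube).
Definition cube_defect i (b : cube) : nat := #|[set j | b j != rep i b j]|.

Lemma cube_cover_count (c : cube -> 'I_k.+1) :
  (forall b j, X (c b) (cube_flip b j) /\ rep (c b) (cube_flip b j) = rep (c b) b) ->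
  (#|{: cube}| * N <= \sum_b cube_defect (c b) b + \sum_i \sum_(b | X i b) cube_defect i b)%N.
Proof.
move=> hc; pose dft i (b : cube) j : nat := b j != rep i b j.
pose F (b : cube) j := (\sum_i (X i b && (b j != rep i b j) : nat))%N.
have defectE i (b : cube) : cube_defect i b = \sum_j dft i b j.
  rewrite /cube_defect -sum1dep_card big_mkcond.
  by apply: eq_bigr => j _; rewrite /dft; case: (_ != _).
have key (b : cube) j : (1 <= dft (c b) b j + F (cube_flip b j) j)%N.
  case: (eqVneq (b j) (rep (c b) b j)) => [e|]; last by rewrite /dft => ->.
  have [Xf rep_f] := hc b j.
  by rewrite /F (bigD1 (c b)) //= Xf rep_f ffunE eqxx /dft -e eqxx; case: (b j).
have -> : (#|{: cube}| * N = \sum_(b : cube) \sum_(j < N) 1)%N.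
  by under eq_bigr do rewrite sum1_card card_ord; rewrite sum_nat_const.
have sum_key : (\sum_(b : cube) \sum_(j < N) 1 <=
    \sum_(b : cube) \sum_(j < N) (dft (c b) b j + F (cube_flip b j) j))%N.
  by apply: leq_sum => b _; apply: leq_sum => j _; apply: key.
apply: leq_trans sum_key _.
rewrite [leqLHS](eq_bigr (fun b => \sum_j dft (c b) b j + \sum_j F (cube_flip b j) j)%N);
  last by move=> b _; rewrite big_split.
rewrite big_split leq_add //=.
  by apply: eq_leq; apply: eq_bigr => b _; rewrite defectE.
rewrite exchange_big /=.
have flip_sum j : (\sum_(b : cube) F (cube_flip b j) j = \sum_(b : cube) F b j)%N.
  by rewrite [RHS](reindex_inj (@cube_flip_inj j)).
under eq_bigr => j _ do rewrite flip_sum.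
apply: eq_leq; rewrite exchange_big /=.
under eq_bigr do rewrite exchange_big /=.
rewrite exchange_big /=; apply: eq_bigr => i _; rewrite [RHS]big_mkcond; apply: eq_bigr => b _.
by case: (X i b); rewrite /= ?defectE // big1.
Qed.

Lemma cube_cover_bound (R : realFieldType) (d : R) :
  (forall i b, X i b -> ((cube_defect i b)%:R <= d)%R) ->
  (forall b, exists i, X i b /\
     forall j, X i (cube_flip b j) /\ rep i (cube_flip b j) = rep i b) ->
  (N%:R <= k.+2%:R * d)%R.
Proof.
move=> defect_le /choice [c hc].
have K_gt0 : (0 < #|{: cube}|)%N by apply/card_gt0P; exists [ffun=> false].
have d_ge0 : (0 <= d)%R by apply: le_trans (defect_le _ _ (proj1 (hc [ffun=> false]))).
have sum_d : (\sum_(b : cube) d = #|{: cube}|%:R * d)%R by rewrite sumr_const mulr_natl.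
have := cube_cover_count (fun b j => proj2 (hc b) j).
rewrite -(ler_nat R) natrM natrD !natr_sum => count.
have S1 : (\sum_(b : cube) (cube_defect (c b) b)%:R <= #|{: cube}|%:R * d)%R.
  by rewrite -sum_d; apply: ler_sum => b _; apply/defect_le/(proj1 (hc b)).
have S2 : (\sum_i (\sum_(b | X i b) cube_defect i b)%:R <= k.+1%:R * (#|{: cube}|%:R * d))%R.
  apply: (@le_trans _ _ (\sum_(i < k.+1) \sum_(b : cube) d)%R).
    apply: ler_sum => i _; rewrite natr_sum big_mkcond /=; apply: ler_sum => b _.
    by case: ifP => [/defect_le|].
  by rewrite sumr_const card_ord mulr_natl sum_d.
rewrite -(ler_pM2l (_ : 0 < #|{: cube}|%:R)%R) ?ltr0n //.
have -> : (k.+2%:R = k.+1%:R + 1 :> R)%R by rewrite -addn1 natrD.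
lra.
Qed.
End CubeCover.

Section Representatives.
Variables (T : finType) (E : T -> T -> Prop).
Hypothesis E_sym : forall x y, E x y -> E y x.
Hypothesis E_trans : forall x y z, E x y -> E y z -> E x z.

Definition rel_rep (x : T) : T := odflt x [pick y | `[< E x y >] ].

Lemma rel_repE x : E x x -> E x (rel_rep x).
Proof.
by move=> Exx; rewrite /rel_rep; case: pickP => [y /asboolP //|/(_ x)]; rewrite asboolT.
Qed.

Lemma rel_rep_eq x y : E x y -> rel_rep x = rel_rep y.
Proof.
move=> Exy; rewrite /rel_rep (@eq_pick _ _ (fun z => `[< E y z >])) => [|z].
  by case: pickP => //= /(_ x); rewrite asboolT //; apply: E_sym.
by apply/asboolP/asboolP => [/(E_trans (E_sym Exy))|/(E_trans Exy)].
Qed.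
End Representatives.

Section Components.
Variables (R : realType) (T : Type) (A : T -> Prop) (dlt : T -> T -> R -> Prop) (r : R).
Local Notation comp := (rcomp A dlt r).

Lemma rcomp_step x y : A x -> A y -> dlt x y r -> comp x y.
Proof. by move=> ax ay dxy; do 2!split => //; apply: rt_step. Qed.

Lemma rcomp_refl x : A x -> comp x x.
Proof. by move=> ax; do 2!split => //; apply: rt_refl. Qed.

Lemma rcomp_trans x y z : comp x y -> comp y z -> comp x z.
Proof. by move=> [ax [_ cxy]] [_ [az cyz]]; do 2!split => //; apply: rt_trans cxy cyz. Qed.

Lemma rcomp_sym x y : (forall a b, dlt a b r -> dlt b a r) -> comp x y -> comp y x.
Proof.
move=> dlt_sym [ax [ay cxy]]; do 2!split => //.
elim: cxy => [a b [aa [ab dab]]|a|a b c _ IHab _ IHbc].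
- by apply: rt_step; do 2!split => //; apply: dlt_sym.
- exact: rt_refl.
- exact: rt_trans IHbc IHab.
Qed.

Lemma rcomp_map (U : Type) (B : U -> Prop) (dlt' : U -> U -> R -> Prop) (r' : R) (F : T -> U) :
  (forall x, A x -> B (F x)) -> (forall x y, dlt x y r -> dlt' (F x) (F y) r') ->
  forall x y, comp x y -> rcomp B dlt' r' (F x) (F y).
Proof.
move=> AB dltF x y [/AB bx [/AB by_ cxy]]; do 2!split => //.
elim: cxy => [a b [aa [ab dab]]|a|a b c _ IHab _ IHbc].
- by apply: rt_step; split; [exact: AB | split; [exact: AB | exact: dltF]].
- exact: rt_refl.
- exact: rt_trans IHab IHbc.
Qed.
End Components.

Section Domination.
Variable R : realType.
Local Open Scope ring_scope.
Local Open Scope ereal_scope.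

Lemma weakly_dominates_scale (f : R -> \bar R) (lam C : R) : (1 <= lam)%R -> (0 <= C)%R ->
  weakly_dominates f (fun t => lam%:E * f (lam * t + C)%R).
Proof.
by move=> lam_ge1 C_ge0; exists lam, C; do 2!split => //; move=> t _; rewrite leeDl ?lee_fin.
Qed.

Definition growth_bound (D : R -> \bar R) (gamma : R -> nat) (t : R) : \bar R :=
  (D t + t%:E) * growth_ext gamma (D t + t%:E).

Lemma growth_bound_ge0 (D : R -> \bar R) gamma t :
  (forall t, (0 <= t)%R -> 0 <= D t) -> (0 <= t)%R -> 0 <= growth_bound D gamma t.
Proof.
move=> D_ge0 t_ge0; apply: mule_ge0; first by apply: adde_ge0; rewrite ?lee_fin ?D_ge0.
by case: (D t + t%:E) => //= x; rewrite lee_fin.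
Qed.

Lemma lamp_cost_le (s d rho : R) : (1 <= s)%R -> (0 <= d)%R -> (1 <= rho)%R ->
  (s * (2 * (d + rho) + 1) + d <= 4 * ((d + rho) * s))%R.
Proof.
move=> s_ge1 d_ge0 rho_ge1.
have s_le : (s <= (d + rho) * s)%R by rewrite ler_peMl //; lra.
have d_le : (d <= (d + rho) * s)%R.
  by apply: le_trans (_ : d + rho <= _)%R; [lra | rewrite ler_peMr //; lra].
nra.
Qed.
End Domination.

Section Wreath.
Variables (G : Type) (mulG : G -> G -> G) (oneG : G) (invG : G -> G).
Hypothesis HG : is_group mulG oneG invG.
Variables (H : finGroupType) (S : seq G) (R : realType).
Local Notation A := (fun s => List.In s S).
Local Notation letterG := (symm invG A).
Local Notation wd := (wdist_le mulG invG A).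
Local Notation Wm := (wr_mul mulG invG (H := H)).
Local Notation Wi := (wr_inv mulG invG (H := H)).
Local Notation Wg := (wr_gens oneG (H := H) S).
Local Notation letterW := (symm Wi Wg).
Local Notation wdW := (wdist_le Wm Wi Wg).
Local Notation dltG := (@wdist_lt R _ mulG invG A).
Local Notation dleG := (@wdist_leE R _ mulG invG A).
Local Notation dltW := (@wdist_lt R _ Wm Wi Wg).
Local Notation dleW := (@wdist_leE R _ Wm Wi Wg).

Lemma wr_is_group : is_group Wm (wr_one oneG H) Wi.
Proof.
rewrite /wr_mul /wr_one /wr_inv; split; [|split; [|split; [|split]]].
- move=> [f1 g1] [f2 g2] [f3 g3] /=; congr pair; last exact: (grp_mulA HG).
  by apply: funext => q; rewrite (grp_invMg HG) -(grp_mulA HG) mulgA.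
- move=> [f g] /=; congr pair; last exact: (grp_mul1g HG).
  by apply: funext => q; rewrite (grp_invg1 HG) (grp_mul1g HG) mul1g.
- move=> [f g] /=; congr pair; last exact: (grp_mulg1 HG).
  by apply: funext => q; rewrite mulg1.
- move=> [f g] /=; congr pair; last exact: (grp_mulVg HG).
  by apply: funext => q; rewrite (grp_invgK HG) mulVg.
- move=> [f g] /=; congr pair; last exact: (grp_mulgV HG).
  by apply: funext => q; rewrite (grp_mulKVg HG) mulgV.
Qed.

Lemma wr_letter_shape s : letterW s ->
  (forall q, q <> oneG -> s.1 q = 1%g) /\ (s.2 = oneG \/ letterG s.2).
Proof.
case=> [[[a [_ [s2 [_ s1]]]]|[s0 [hs0 ->]]]|]; first by split => //; left.
  by split => //; right; left.
rewrite /wr_inv => -[[a [_ [s2 [_ s1]]]]|[s0 [hs0 e]]] /=.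
  have s2_1 := grp_invg_eq1 HG s2; split; last by left.
  by move=> q /s1; rewrite /= s2_1 (grp_mul1g HG) => /eqP; rewrite invg_eq1 => /eqP.
case: e => e1 e2; split; last by right; right; rewrite e2.
move=> q _; have /= := congr1 (fun F => F (mulG (invG s.2) q)) e1.
by rewrite (grp_mulKVg HG) => /eqP; rewrite invg_eq1 => /eqP.
Qed.

Lemma wr_mul_letter_lamp z s q : letterW s -> (Wm z s).1 q <> z.1 q -> q = z.2.
Proof.
move=> /wr_letter_shape [s1 _]; rewrite /wr_mul /=.
case: (pselect (mulG (invG z.2) q = oneG)) => [e _|ne]; last by rewrite s1 // mulg1.
by rewrite -(grp_mulKVg HG z.2 q) e (grp_mulg1 HG).
Qed.

Lemma letterW_lift s : letterG s -> letterW (fun _ => 1%g, s).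
Proof.
case=> hs; first by left; right; exists s.
right; right; exists (invG s); split => //.
by rewrite /wr_inv; congr pair; apply: funext => q; rewrite invg1.
Qed.

Lemma wdist_le_cursor x y m : wdW x y m -> wd x.2 y.2 m.
Proof.
apply: (wdist_le_lipschitz (F := snd)) => a s /wr_letter_shape [_ [/= ->|hs]].
  by rewrite (grp_mulg1 HG); exists [::].
exact: wdist_le_step.
Qed.

Lemma wdist_le_move f g g' m : wd g g' m -> wdW (f, g) (f, g') m.
Proof.
apply: (wdist_le_lipschitz (F := fun g => (f, g))) => a s hs.
have -> : (f, mulG a s) = Wm (f, a) (fun _ => 1%g, s).
  by rewrite /wr_mul; congr pair; apply: funext => q; rewrite mulg1.
exact/wdist_le_step/letterW_lift.
Qed.

Lemma wdist_le_lamp_change x y m : wdW x y m ->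
  forall q, y.1 q <> x.1 q -> exists2 m', (m' < m)%N & wd x.2 q m'.
Proof.
elim/wdist_le_ind => [a|a s b k hs IH|a b k k' le IH] q //.
- case: (eqVneq ((Wm a s).1 q) (a.1 q)) => [e|/eqP ne] hq.
    have [m' lt_m'k hm'] : exists2 m', (m' < k)%N & wd (Wm a s).2 q m' by apply: IH; rewrite e.
    exists m'.+1 => //; rewrite -add1n; apply: wdist_le_trans hm'.
    exact/wdist_le_cursor/wdist_le_step.
  by exists 0%N => //; rewrite (wr_mul_letter_lamp hs ne); exists [::].
- by move=> /IH [m' lt_m'k hm']; exists m' => //; apply: leq_trans le.
Qed.

Lemma wdist_lt_lamp_change x y (r : R) q :
  wdist_lt Wm Wi Wg x y r -> y.1 q <> x.1 q -> wdist_lt mulG invG A x.2 q r.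
Proof.
case=> m [hm hmr] /(wdist_le_lamp_change hm) [m' lt_m'm hm'].
by exists m'; split => //; apply: lt_trans hmr; rewrite ltr_nat.
Qed.

Lemma lamp_changes_le (I : finType) (pos : I -> G) : injective pos ->
  forall x y m, wdW x y m -> (#|[set j | y.1 (pos j) != x.1 (pos j)]| <= m)%N.
Proof.
move=> pos_inj; apply: wdist_le_ind => [a|a s b k hs IH|a b k k' le IH].
- by apply: eq_leq; apply: eq_card0 => j; rewrite !inE eqxx.
- set B := [set j | b.1 (pos j) != (Wm a s).1 (pos j)].
  set C := [set j | (Wm a s).1 (pos j) != a.1 (pos j)].
  have le_C1 : (#|C| <= 1)%N.
    apply/card_le1_eqP => j1 j2; rewrite !inE.
    move=> /eqP/(wr_mul_letter_lamp hs) e1 /eqP/(wr_mul_letter_lamp hs) e2.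
    by apply: pos_inj; rewrite e1.
  apply: leq_trans (subset_leq_card (_ : _ \subset B :|: C)) _.
    apply/fintype.subsetP => j; rewrite !inE.
    by case: (eqVneq (b.1 (pos j)) ((Wm a s).1 (pos j))) => [->|].
  by apply: leq_trans (leq_card_setU _ _) _; rewrite -addn1 leq_add.
- exact: leq_trans IH le.
Qed.

Definition set_lamp (f : G -> H) (q0 : G) (v : H) : G -> H :=
  fun q => if `[< q = q0 >] then v else f q.

Lemma wdist_le_set_lamp f g v : wdW (f, g) (set_lamp f g v, g) 1.
Proof.
case: (eqVneq v (f g)) => [->|ne_v].
  have -> : set_lamp f g (f g) = f.
    by apply: funext => q; rewrite /set_lamp; case: asboolP => // ->.
  by exists [::].
set c := ((f g)^-1 * v)%g.
have -> : (set_lamp f g v, g) = Wm (f, g) (fun q => if `[< q = oneG >] then c else 1%g, oneG).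
  rewrite /wr_mul /=; congr pair; last by rewrite (grp_mulg1 HG).
  apply: funext => q; rewrite /set_lamp; case: (pselect (q = g)) => [->|ne_qg].
    by rewrite (grp_mulVg HG) !asboolT // mulKVg.
  rewrite !asboolF ?mulg1 // => e; apply: ne_qg.
  by rewrite -(grp_mulKVg HG g q) e (grp_mulg1 HG).
apply: wdist_le_step; left; left; exists c; split.
  by move/eqP; rewrite /c -eq_mulVg1 eq_sym (negbTE ne_v).
split=> //; split=> /=; first by rewrite asboolT.
by move=> q ne_q; rewrite asboolF.
Qed.

Lemma wdist_le_set_lamp_at f g h v m :
  wd oneG h m -> wdW (f, g) (set_lamp f (mulG g h) v, g) m.*2.+1.
Proof.
move=> hm; have hgh : wd g (mulG g h) m.
  by have := wdist_le_mull HG g hm; rewrite (grp_mulg1 HG).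
have -> : m.*2.+1 = (m + 1 + m)%N by rewrite addn1 addSn addnn.
apply: wdist_le_trans (wdist_le_trans (wdist_le_move f hgh) (wdist_le_set_lamp _ _ _)) _.
exact/wdist_le_move/(wdist_le_sym HG).
Qed.

Lemma wdist_le_set_lamps (L : seq G) (B : R) f f' g :
  (forall h, List.In h L -> exists m, wd oneG h m /\ (m%:R <= B)%R) ->
  (forall q, f' q <> f q -> List.In (mulG (invG g) q) L) ->
  exists m, wdW (f, g) (f', g) m /\ (m%:R <= (size L)%:R * (2 * B + 1))%R.
Proof.
elim: L f => [|h L IH] f hL hdiff.
  have -> : f' = f by apply: funext => q; case: (eqVneq (f' q) (f q)) => // /eqP/hdiff.
  by exists 0%N; split; [exists [::] | rewrite mul0r].
have [m [hm mB]] := hL h (or_introl erefl).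
set f1 := set_lamp f (mulG g h) (f' (mulG g h)).
have [m1 [hm1 m1B]] : exists m, wdW (f1, g) (f', g) m /\
    (m%:R <= (size L)%:R * (2 * B + 1))%R.
  apply: IH => [h' hh'|q]; first exact: hL (or_intror hh').
  rewrite /f1 /set_lamp; case: asboolP => [-> /(_ erefl) []|ne_q].
  case/hdiff => [e|] //; exfalso; apply: ne_q.
  by rewrite e (grp_mulKVg HG).
exists (m.*2.+1 + m1)%N; split.
  exact: wdist_le_trans (wdist_le_set_lamp_at _ _ _ hm) hm1.
have m2 : ((m.*2.+1)%:R = 2 * m%:R + 1 :> R)%R by rewrite -addn1 natrD -mul2n natrM.
by rewrite /= natrD m2 -[(size L).+1]addn1 natrD mulrDl mul1r; lra.
Qed.

Lemma wdist_lt_cursor (r rho : R) x y : (r <= rho)%R -> dltW x y r -> dltG x.2 y.2 rho.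
Proof.
move=> le_r [m [hm lt_mr]]; exists m; split; first exact: wdist_le_cursor.
exact: lt_le_trans le_r.
Qed.

Lemma rcomp_lamp_change (P : wr G H -> Prop) (r : R) x y q :
  rcomp P dltW r x y -> y.1 q <> x.1 q -> exists z, rcomp P dltW r x z /\ dltG z.2 q r.
Proof.
case=> px [_ cxy]; move: y cxy.
apply: clos_refl_trans_ind_left => [/(_ erefl) []|z1 z2 cxz1 IH [pz1 [_ dz]]].
case: (eqVneq (z1.1 q) (x.1 q)) => [e hq|/eqP/IH //].
exists z1; split; first by do 2!split => //.
by apply: wdist_lt_lamp_change dz _; rewrite e.
Qed.

Lemma wdist_le_rcomp_lift (V : G -> Prop) (P : wr G H -> Prop) (r rho d : R) (L : seq G) :
  (forall p, P p -> V p.2) -> (r <= rho)%R ->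
  (forall a b, rcomp V dltG rho a b -> exists m, wd a b m /\ (m%:R <= d)%R) ->
  (forall h, List.In h L <-> dltG oneG h (d + rho)) ->
  forall x y, rcomp P dltW r x y ->
  exists m, wdW x y m /\ (m%:R <= (size L)%:R * (2 * (d + rho) + 1) + d)%R.
Proof.
move=> PV le_r diamV hL x y cxy.
have proj a b : rcomp P dltW r a b -> rcomp V dltG rho a.2 b.2.
  by apply: rcomp_map => // a' b'; apply: wdist_lt_cursor.
have [m0 [hm0 m0d]] := diamV _ _ (proj _ _ cxy).
have [m1 [hm1 m1B]] : exists m, wdW (x.1, x.2) (y.1, x.2) m /\
    (m%:R <= (size L)%:R * (2 * (d + rho) + 1))%R.
  apply: wdist_le_set_lamps => [h /hL [m [hm lt_m]]|q].
    by exists m; split => //; apply: ltW.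
  move=> /(rcomp_lamp_change cxy) [z [cxz [m2 [hm2 lt_m2r]]]].
  have [m3 [hm3 m3d]] := diamV _ _ (proj _ _ cxz).
  apply/hL; exists (m3 + m2)%N; split.
    by have := wdist_le_mull HG (invG x.2) (wdist_le_trans hm3 hm2); rewrite (grp_mulVg HG).
  by rewrite natrD; lra.
exists (m1 + m0)%N; split; last by rewrite natrD; lra.
move: hm1 (wdist_le_move y.1 hm0); rewrite -!surjective_pairing.
exact: wdist_le_trans.
Qed.

Local Open Scope ring_scope.

(* The pieces of index beyond [n] are empty, the guard keeping the junk [inord i] out. *)
Definition lift_cover (n k : nat) (U : 'I_n.+1 -> G -> Prop) (i : 'I_k.+1) (p : wr G H) :
  Prop := wr_elt p /\ (i < n.+1)%N /\ U (inord i) p.2.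

(* The scale [4 r + 1] exceeds both [r] and [1]; the factor 4 absorbs the path cost
   [gamma B * (2 B + 1) + D rho] with [B = D rho + rho >= 1]. *)
Lemma wreath_control_upper gamma n D k :
  is_growth_function mulG oneG invG S gamma ->
  control_function (fun _ : G => True) dltG dleG n D -> (n <= k)%N ->
  control_function (wr_elt (H := H)) dltW dleW k
    (fun r => 4%:E * growth_bound D gamma (4 * r + 1))%E.
Proof.
move=> Hgamma [D_ge0 HD] le_nk; split.
  move=> t t_ge0; rewrite mule_ge0 ?lee_fin // growth_bound_ge0 //.
  by rewrite addr_ge0 ?mulr_ge0.
move=> r r_gt0; set rho := (4 * r + 1)%R.
have rho_gt0 : (0 < rho)%R by rewrite /rho; lra.
have [U [_ [U_cover [U_ball U_diam]]]] := HD rho rho_gt0.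
have le_nk1 : (n.+1 <= k.+1)%N by [].
exists (lift_cover U); split; first by move=> i p [].
split.
  move=> x ex; have [i hi] := U_cover x.2 I; exists (widen_ord le_nk1 i).
  by do 2!split => //=; rewrite ?ltn_ord ?inord_val.
split.
  move=> x ex; have [i hi] := U_ball x.2 I; exists (widen_ord le_nk1 i) => y ey dxy.
  do 2!split => //=; rewrite ?ltn_ord ?inord_val //.
  by apply: hi => //; apply: wdist_lt_cursor dxy; rewrite /rho; lra.
move=> i x y cxy; rewrite /growth_bound.
case E: (D rho) => [d| |]; last by have := D_ge0 rho (ltW rho_gt0); rewrite E.
  2: by left; rewrite /= mulyy mulry gtr0_sg // mul1e.
right; have d_ge0 : (0 <= d)%R by rewrite -lee_fin -E D_ge0 // ltW.
have diamU a b : rcomp (U (inord i)) dltG rho a b -> exists m, wd a b m /\ (m%:R <= d)%R.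
  by move=> /U_diam; rewrite E => -[//|[m [hm]]]; rewrite lee_fin; exists m.
have [L [_ [sizeL hL]]] := Hgamma (d + rho)%R.
have le_r : (r <= rho)%R by rewrite /rho; lra.
have [m [hm m_le]] := wdist_le_rcomp_lift (fun p lp => proj2 (proj2 lp)) le_r diamU hL cxy.
exists m; split => //; rewrite /= -!EFinM lee_fin -sizeL.
have L_ge1 : (1 <= (size L)%:R :> R)%R.
  have : List.In oneG L by apply/hL; exists 0%N; split; [exists [::] | lra].
  by case: (L) => // *; rewrite ler1n.
by apply: le_trans m_le _; apply: lamp_cost_le => //; rewrite /rho; lra.
Qed.

Section LampCube.
Variables (l : seq G) (a : H).
Hypotheses (l_uniq : List.NoDup l) (a_neq1 : a != 1%g).
Local Notation N := (size l).
Local Notation cube := {ffun 'I_N -> bool}.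

Definition lamp_pos (j : 'I_N) : G := List.nth j l oneG.

Lemma lamp_pos_in j : List.In (lamp_pos j) l.
Proof. by apply: List.nth_In; apply/ssrnat.ltP. Qed.

Lemma lamp_pos_inj : injective lamp_pos.
Proof.
move=> i j /(proj1 (List.NoDup_nth l oneG) l_uniq) e.
by apply: val_inj; apply: e; apply/ssrnat.ltP.
Qed.

Definition lamp_cube (b : cube) : wr G H :=
  (fun q => if `[< exists2 j, b j & q = lamp_pos j >] then a else 1%g, oneG).

Lemma lamp_cube_pos b j : (lamp_cube b).1 (lamp_pos j) = if b j then a else 1%g.
Proof.
rewrite /=; case: asboolP => [[j' bj' /lamp_pos_inj ->]|nb]; first by rewrite bj'.
by case: ifP => // bj; case: nb; exists j.
Qed.

Lemma lamp_cube_elt b : wr_elt (lamp_cube b).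
Proof. by exists l => q /=; case: asboolP => // -[j _ ->] _; apply: lamp_pos_in. Qed.

Lemma lamp_cube_dist b y m :
  wdW (lamp_cube b) (lamp_cube y) m -> (#|[set j | b j != y j]| <= m)%N.
Proof.
move/(lamp_changes_le lamp_pos_inj); apply: leq_trans; apply/eq_leq/eq_card => j.
rewrite !inE !lamp_cube_pos.
by case: (b j); case: (y j); rewrite /= ?eqxx ?a_neq1 // eq_sym a_neq1.
Qed.

Lemma lamp_cube_flip b j m :
  wd oneG (lamp_pos j) m -> wdW (lamp_cube b) (lamp_cube (cube_flip b j)) m.*2.+1.
Proof.
set v := (lamp_cube (cube_flip b j)).1 (lamp_pos j).
move=> /(wdist_le_set_lamp_at (lamp_cube b).1 oneG v).
congr wdist_le; congr pair; apply: funext => q; rewrite (grp_mul1g HG) /set_lamp.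
case: asboolP => [-> //|ne_q] /=; congr (if _ then _ else _); apply: asbool_equiv_eq.
by split=> -[j' bj' e]; exists j' => //; move: bj'; rewrite ffunE;
  case: eqP => // ej; case: ne_q; rewrite e ej.
Qed.
End LampCube.

Lemma ball_size_le_control k DW (l : seq G) (a : H) (t d : R) :
  control_function (wr_elt (H := H)) dltW dleW k DW ->
  a != 1%g -> List.NoDup l -> 0 <= t -> (forall g, List.In g l -> dltG oneG g t) ->
  DW (k.+2%:R * t + 1) = d%:E -> (size l)%:R <= k.+2%:R * d.
Proof.
move=> [_ HDW] a_neq1 l_uniq t_ge0 l_ball DW_d.
set r := k.+2%:R * t + 1; have r_gt0 : 0 < r by rewrite /r ltr_wpDl ?mulr_ge0.
have [Xs [_ [_ [X_ball X_diam]]]] := HDW r r_gt0.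
pose cube := @lamp_cube l a.
pose E i b y := rcomp (Xs i) dltW r (cube b) (cube y).
have E_sym i : forall b y, E i b y -> E i y b.
  by move=> b y; apply: rcomp_sym => x z; exact: (wdist_lt_sym wr_is_group).
have E_trans i : forall b y z, E i b y -> E i y z -> E i b z.
  by move=> b y z; apply: rcomp_trans.
have near b j : dltW (cube b) (cube (cube_flip b j)) r.
  have [m [hm lt_mt]] := l_ball _ (lamp_pos_in j).
  exists m.*2.+1; split; first exact: lamp_cube_flip.
  have le_k2 : 2 <= k.+2%:R :> R by rewrite ler_nat.
  rewrite /r -addn1 natrD -mul2n natrM; nra.
apply: (cube_cover_bound (X := fun i b => `[< Xs i (cube b) >])
                         (rep := fun i => rel_rep (E i))).
  move=> i b /asboolP Xb; have /X_diam : E i b (rel_rep (E i) b).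
    by apply: rel_repE => //; apply: rcomp_refl.
  rewrite DW_d => -[//|[m [/(lamp_cube_dist l_uniq a_neq1) le_m]]]; rewrite lee_fin.
  by apply: le_trans; rewrite ler_nat; apply: le_m.
move=> b; have [i Xi] := X_ball _ (lamp_cube_elt a b).
have Xb : Xs i (cube b).
  by apply: Xi; [apply: lamp_cube_elt | exists 0%N; split; [exists [::] | ]].
exists i; split; first exact/asboolP.
move=> j; have Xf : Xs i (cube (cube_flip b j)) by apply: Xi (lamp_cube_elt _ _) (near b j).
split; first exact/asboolP.
by apply: rel_rep_eq (E_sym i) (E_trans i) _ _ _; apply/E_sym/rcomp_step.
Qed.

Lemma wreath_control_dominates_growth gamma k DW :
  is_growth_function mulG oneG invG S gamma -> (1 < #|[set: H]|)%N ->
  control_function (wr_elt (H := H)) dltW dleW k DW ->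
  weakly_dominates DW (fun t => ((gamma t)%:R)%:E).
Proof.
move=> Hgamma /card_gt1P [x [y [_ _ ne_xy]]] HDW.
have [a a_neq1] : exists a : H, a != 1%g.
  by case: (eqVneq x 1%g) => [ex|]; [exists y; rewrite -ex eq_sym | exists x].
exists k.+2%:R, 1; split; first by rewrite ler1n.
split=> // t t_ge0; have [l [l_uniq [size_l l_ball]]] := Hgamma t.
have r_ge0 : 0 <= k.+2%:R * t + 1 by rewrite addr_ge0 ?mulr_ge0.
case E: (DW (k.+2%:R * t + 1)) => [d| |]; last by have := proj1 HDW _ r_ge0; rewrite E.
  have := ball_size_le_control HDW a_neq1 l_uniq t_ge0 (fun g => proj1 (l_ball g)) E.
  by rewrite size_l -EFinM -EFinD lee_fin => le_d; lra.
by rewrite mulry gtr0_sg ?ltr0n // mul1e leey.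
Qed.
End Wreath.

Local Open Scope ring_scope.
Local Open Scope ereal_scope.

Theorem theorem4p5 (R : realType)
  (G : Type) (mulG : G -> G -> G) (oneG : G) (invG : G -> G)
  (HG : is_group mulG oneG invG)
  (S : seq G) (HS : generates mulG oneG invG S)
  (Ginf : ~ (exists l : seq G, forall g : G, List.In g l))
  (H : finGroupType) (Hnt : (1 < #|[set: H]|)%N)
  (gamma : R -> nat) (Hgamma : is_growth_function mulG oneG invG S gamma)
  (n : nat) (D : R -> \bar R)
  (HD : control_function (fun _ : G => True)
          (wdist_lt mulG invG (fun s => List.In s S))
          (wdist_leE mulG invG (fun s => List.In s S)) n D) :
  (forall k : nat, (n <= k)%N ->
     exists DW : R -> \bar R,
       control_function (wr_elt (G := G) (H := H))
         (wdist_lt (wr_mul mulG invG (H := H)) (wr_inv mulG invG (H := H)) (wr_gens oneG (H := H) S))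
         (wdist_leE (wr_mul mulG invG (H := H)) (wr_inv mulG invG (H := H)) (wr_gens oneG (H := H) S))
         k DW /\
       weakly_dominates
         (fun t : R => (D t + t%:E) * growth_ext gamma (D t + t%:E)) DW) /\
  (forall k : nat, (n <= k)%N ->
     forall DW : R -> \bar R,
       control_function (wr_elt (G := G) (H := H))
         (wdist_lt (wr_mul mulG invG (H := H)) (wr_inv mulG invG (H := H)) (wr_gens oneG (H := H) S))
         (wdist_leE (wr_mul mulG invG (H := H)) (wr_inv mulG invG (H := H)) (wr_gens oneG (H := H) S))
         k DW ->
       weakly_dominates DW (fun t : R => ((gamma t)%:R)%:E)).
Proof.
split=> k le_nk.
  exists (fun r => 4%:E * growth_bound D gamma (4 * r + 1)%R).
  split; first exact: (wreath_control_upper HG H Hgamma HD le_nk).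
  by apply: (weakly_dominates_scale (growth_bound D gamma)); rewrite ?ler1n.
by move=> DW; apply: (wreath_control_dominates_growth HG Hgamma Hnt).
Qed.
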